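(* Consider a platoon $i$ of CAVs with members $j\in\{0,1,\dots,m_i\}$ ($j=0$ the leader), each obeying $\dot p_{i,j}=v_{i,j}$, $\dot v_{i,j}=u_{i,j}$, subject to $u_{\min}\le u_{i,j}(t)\le u_{\max}$, $0<v_{\min}\le v_{i,j}(t)\le v_{\max}$, and $p_{i,j-1}(t)-p_{i,j}(t)\ge\Delta_i+l_c$ for $j\in\{1,\dots,m_i\}$. Assume that at time $t_i^0$ all members have equal speed and $p_{i,j-1}(t_i^0)-p_{i,j}(t_i^0)-l_c=\Delta_i$. Let $u^*_{i,0}(t)=6a_it+2b_i$, $t\in[t_i^0,t_i^f]$, be the leader's optimal control, whose control and speed trajectories satisfy the control and speed constraints. Then for every follower $j\in\{1,\dots,m_i\}$, the control input $u_{i,j}(t)=u^*_{i,0}(t)$ for all $t\in[t_i^0,t_i^f]$ is energy- and time-optimal (it yields linear control, quadratic speed and cubic position trajectories of the energy-optimal form) and satisfies the control constraint, the speed constraint, and the intra-platoon rear-end safety constraint on $[t_i^0,t_i^f]$.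
   Context: The leader's optimal control is obtained from the leader's problem: the leader uses the unconstrained energy-optimal form $u_i(t)=6a_it+2b_i$, $v_i(t)=3a_it^2+2b_it+c_i$, $p_i(t)=a_it^3+b_it^2+c_it+d_i$ with boundary conditions $p_i(t_i^0)=p_i^0$, $v_i(t_i^0)=v_i^0$, $p_i(t_i^f)=p_i^f$, $u_i(t_i^f)=0$, with minimal exit time $t_i^f$ chosen so that none of the control, speed and safety constraints is violated. $l_c$ is the vehicle length and $\Delta_i$ the prescribed inter-vehicle gap. *)

From Stdlib Require Import Reals.
From Coquelicot Require Import Coquelicot.
Open Scope R_scope.

Definition opt_u (a b : R) (t : R) : R := 6 * a * t + 2 * b.
Definition opt_v (a b c : R) (t : R) : R := 3 * a * t ^ 2 + 2 * b * t + c.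
Definition opt_p (a b c d : R) (t : R) : R := a * t ^ 3 + b * t ^ 2 + c * t + d.

From Stdlib Require Import Reals Lra Lia.
From Coquelicot Require Import Coquelicot.
Open Scope R_scope.

(* A follower that starts at the leader's speed and copies its control has zero
   relative acceleration, hence zero relative speed, hence a constant gap: its
   trajectory is the leader's cubic shifted by a constant, so it inherits the
   leader's control and speed bounds, and every gap keeps its initial value
   Delta + lc. *)

Lemma is_derive_zero_const (f : R -> R) (t0 tf : R) :
  (forall t, t0 <= t <= tf -> is_derive f t 0) ->
  forall t, t0 <= t <= tf -> f t = f t0.
Proof.
  intros Hf t Ht.
  destruct (Req_dec t t0) as [-> | Hne]; [reflexivity |].
  symmetry. apply (eq_is_derive f t0 t).
  - intros s Hs. apply Hf. lra.
  - lra.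
Qed.

Lemma is_derive_sub_const (f g df dg : R -> R) (t0 tf : R) :
  (forall t, t0 <= t <= tf -> is_derive f t (df t)) ->
  (forall t, t0 <= t <= tf -> is_derive g t (dg t)) ->
  (forall t, t0 <= t <= tf -> df t = dg t) ->
  forall t, t0 <= t <= tf -> f t - g t = f t0 - g t0.
Proof.
  intros Hf Hg Hd.
  apply (is_derive_zero_const (fun t => f t - g t)).
  intros t Ht.
  replace 0 with (df t - dg t) by (rewrite Hd by exact Ht; ring).
  apply (is_derive_minus f g); auto.
Qed.

Lemma is_derive_opt_p (a b c d t : R) :
  is_derive (opt_p a b c d) t (opt_v a b c t).
Proof. unfold opt_p, opt_v. auto_derive; [exact I | ring]. Qed.

Lemma is_derive_opt_v (a b c t : R) :
  is_derive (opt_v a b c) t (opt_u a b t).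
Proof. unfold opt_v, opt_u. auto_derive; [exact I | ring]. Qed.

Lemma opt_control_trajectory (x y w : R -> R) (a b c t0 tf : R) :
  (forall t, t0 <= t <= tf -> is_derive x t (y t)) ->
  (forall t, t0 <= t <= tf -> is_derive y t (w t)) ->
  (forall t, t0 <= t <= tf -> w t = opt_u a b t) ->
  y t0 = opt_v a b c t0 ->
  forall t, t0 <= t <= tf ->
    y t = opt_v a b c t /\ x t - opt_p a b c 0 t = x t0 - opt_p a b c 0 t0.
Proof.
  intros Hx Hy Hw Hy0.
  assert (Hspeed : forall t, t0 <= t <= tf -> y t = opt_v a b c t).
  { intros t Ht.
    pose proof (is_derive_sub_const y (opt_v a b c) w (opt_u a b) t0 tf
                  Hy (fun s _ => is_derive_opt_v a b c s) Hw t Ht).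
    lra. }
  intros t Ht. split; [exact (Hspeed t Ht) |].
  exact (is_derive_sub_const x (opt_p a b c 0) y (opt_v a b c) t0 tf
           Hx (fun s _ => is_derive_opt_p a b c 0 s) Hspeed t Ht).
Qed.

Theorem lemma1
  (m : nat) (p v u : nat -> R -> R)
  (a b c d t0 tf umin umax vmin vmax Delta lc : R)
  (Htf : t0 < tf) (Hvmin : 0 < vmin)
  (* leader's optimal control and the resulting trajectories *)
  (Hleader : forall t, t0 <= t <= tf ->
       u 0%nat t = opt_u a b t /\ v 0%nat t = opt_v a b c t /\
       p 0%nat t = opt_p a b c d t)
  (Hleader_uf : u 0%nat tf = 0)
  (* leader's control and speed satisfy the constraints *)
  (Hleader_u : forall t, t0 <= t <= tf -> umin <= u 0%nat t <= umax)
  (Hleader_v : forall t, t0 <= t <= tf -> vmin <= v 0%nat t <= vmax)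
  (* followers' dynamics on [t0, tf] *)
  (Hdyn_p : forall j t, (1 <= j <= m)%nat -> t0 <= t <= tf ->
       is_derive (p j) t (v j t))
  (Hdyn_v : forall j t, (1 <= j <= m)%nat -> t0 <= t <= tf ->
       is_derive (v j) t (u j t))
  (* initial conditions: equal speeds and gaps exactly Delta *)
  (Hv0 : forall j, (1 <= j <= m)%nat -> v j t0 = v 0%nat t0)
  (Hp0 : forall j, (1 <= j <= m)%nat -> p (j - 1)%nat t0 - p j t0 - lc = Delta)
  (* followers copy the leader's control *)
  (Hu : forall j t, (1 <= j <= m)%nat -> t0 <= t <= tf -> u j t = u 0%nat t) :
  forall j, (1 <= j <= m)%nat ->
    (exists a' b' c' d', (forall t, t0 <= t <= tf ->
        u j t = opt_u a' b' t /\ v j t = opt_v a' b' c' t /\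
        p j t = opt_p a' b' c' d' t) /\ u j tf = 0) /\
    (forall t, t0 <= t <= tf ->
        umin <= u j t <= umax /\ vmin <= v j t <= vmax /\
        p (j - 1)%nat t - p j t >= Delta + lc).
Proof.
  assert (Ht0 : t0 <= t0 <= tf) by lra.
  assert (Hfollow : forall j, (1 <= j <= m)%nat -> forall t, t0 <= t <= tf ->
            v j t = opt_v a b c t /\
            p j t - opt_p a b c 0 t = p j t0 - opt_p a b c 0 t0).
  { intros j Hj. apply (opt_control_trajectory (p j) (v j) (u j)).
    - intros t Ht. apply Hdyn_p; assumption.
    - intros t Ht. apply Hdyn_v; assumption.
    - intros t Ht. rewrite Hu by assumption. apply Hleader, Ht.
    - rewrite Hv0 by assumption. apply Hleader, Ht0. }
  assert (Hshift : forall k, (k <= m)%nat -> forall t, t0 <= t <= tf ->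
            p k t - opt_p a b c 0 t = p k t0 - opt_p a b c 0 t0).
  { intros [| k] Hk t Ht.
    - rewrite (proj2 (proj2 (Hleader t Ht))), (proj2 (proj2 (Hleader t0 Ht0))).
      unfold opt_p. ring.
    - apply Hfollow; [lia | exact Ht]. }
  intros j Hj. split.
  - exists a, b, c, (p j t0 - opt_p a b c 0 t0). split.
    + intros t Ht. destruct (Hfollow j Hj t Ht) as [Hvj Hpj].
      split; [| split]; [| exact Hvj |].
      * rewrite Hu by assumption. apply Hleader, Ht.
      * unfold opt_p in *. lra.
    + rewrite Hu by (assumption || lra). exact Hleader_uf.
  - intros t Ht. split; [| split].
    + rewrite Hu by assumption. apply Hleader_u, Ht.
    + rewrite (proj1 (Hfollow j Hj t Ht)), <- (proj1 (proj2 (Hleader t Ht))).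
      apply Hleader_v, Ht.
    + pose proof (Hshift (j - 1)%nat ltac:(lia) t Ht).
      pose proof (Hshift j ltac:(lia) t Ht).
      pose proof (Hp0 j Hj). lra.
Qed.
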